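(* Let $P_n(x)=\sum_{k=0}^{n}\frac{(q^{-n},q^{n+1};q)_k\,(q(1+(q-1)x);q)_k\,q^k}{(q,q,q;q)_k}$ for $n\ge 0$ (this is the $q$-Hahn type family ${}_3\phi_2\!\left(q^{-n},q^{c+d+n+1},q(1+(q-1)x);q^{c+1},q^{d+1};q,q\right)$ with $c=d=0$). Then the $q$-Bernoulli–Carlitz numbers $(\beta_n)_{n\ge0}$ are the moments of the orthogonal polynomials $(P_n)_{n\ge 0}$.
   Context: $q$ is an indeterminate; we work over $\mathbb{Q}(q)$. The $q$-Bernoulli–Carlitz numbers $\beta_n\in\mathbb{Q}(q)$ are defined by: for all $n\ge0$, $q\sum_{k=0}^{n}\binom{n}{k}q^k\beta_k-\beta_n$ equals $q-1$ if $n=0$, $1$ if $n=1$, and $0$ if $n>1$ (so $\beta_0=1$, $\beta_1=-1/(q+1)$). The $q$-Pochhammer symbol is $(a;q)_k=(1-a)(1-qa)\cdots(1-q^{k-1}a)$ and $(a_1,\dots,a_r;q)_k=\prod_i(a_i;q)_k$. A sequence $(m_n)_{n\ge0}$ with $m_0=1$ is called the sequence of moments of a family of polynomials $(P_n)_{n\ge0}$ ($\deg P_n=n$) if the linear functional $L$ on $\mathbb{Q}(q)[x]$ with $L(x^n)=m_n$ makes the family orthogonal: $L(P_mP_n)=0$ for $m\ne n$ and $L(P_n^2)\neq0$. *)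

From HB Require Import structures.
From mathcomp Require Import all_boot all_order all_algebra.
From mathcomp Require Export fraction.
Set Implicit Arguments. Unset Strict Implicit. Unset Printing Implicit Defensive.
Import Order.TTheory GRing.Theory Num.Theory.
Local Open Scope ring_scope.

Definition Qq : fieldType := {fraction {poly rat}}.
Definition q : Qq := FracField.tofrac ('X : {poly rat}).

Definition qpoch (R : comNzRingType) (qq a : R) (k : nat) : R :=
  \prod_(i < k) (1 - qq ^+ i * a).

Definition carlitz_rhs (n : nat) : Qq :=
  if n == 0%N then q - 1 else if n == 1%N then 1 else 0.

Definition is_qBernoulliCarlitz (b : nat -> Qq) : Prop :=
  forall n : nat,
    q * (\sum_(k < n.+1) 'C(n, k)%:R * q ^+ k * b k) - b n = carlitz_rhs n.

Definition Pn (n : nat) : {poly Qq} :=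
  \sum_(k < n.+1)
    ((qpoch q (q ^- n) k * qpoch q (q ^+ n.+1) k * q ^+ k
        / (qpoch q q k * qpoch q q k * qpoch q q k))
     *: qpoch (q%:P) (q%:P * (1 + (q - 1)%:P * 'X)) k).

Definition Lfun (m : nat -> Qq) (p : {poly Qq}) : Qq :=
  \sum_(i < size p) p`_i * m i.

Definition moments_of (m : nat -> Qq) (P : nat -> {poly Qq}) : Prop :=
  m 0%N = 1 /\
  (forall n, size (P n) = n.+1) /\
  (forall i j, i <> j -> Lfun m (P i * P j) = 0) /\
  (forall n, Lfun m (P n * P n) != 0).

From HB Require Import structures.
From mathcomp Require Import all_boot all_order all_algebra.
From mathcomp Require Import ring.

Set Implicit Arguments.
Unset Strict Implicit.
Unset Printing Implicit Defensive.
Local Open Scope ring_scope.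
Import GRing.Theory.

(* Write z = 1 + (q-1)x and e_k = (qz; q)_k, so that P_n = sum_k c_(n,k) e_k.
   The substitution x -> qx + 1 maps z to qz, hence (1 - z) e_k to e_(k+1),
   while (1 - z) e_k = (1 - q^-(k+1)) e_k + q^-(k+1) e_(k+1).  The Carlitz
   relation says exactly that the moment functional satisfies
   q L(f(qx + 1)) - L(f) = (q - 1) f(0) + f'(0); applied to (1 - z) e_k and to
   (1 - z) e_k (1 - z) e_j it yields recursions forcing
   L(e_k e_j) = (1 - q) (q;q)_k^2 (q;q)_j^2 / (q;q)_(k+j+1).
   Then L(P_n e_j) is a terminating q-Chu-Vandermonde sum, equal to a product
   that vanishes for j < n but not for j = n; as P_j is a combination of
   e_0, ..., e_j, this gives orthogonality and nonzero norms. *)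

Section QPochhammer.
Variables (R : comNzRingType) (x : R).

Lemma qpoch0 a : qpoch x a 0 = 1.
Proof. by rewrite /qpoch big_ord0. Qed.

Lemma qpochSr a k : qpoch x a k.+1 = qpoch x a k * (1 - x ^+ k * a).
Proof. by rewrite /qpoch big_ord_recr. Qed.

Lemma qpochSl a k : qpoch x a k.+1 = (1 - a) * qpoch x (x * a) k.
Proof.
rewrite /qpoch big_ord_recl /= expr0 mul1r; congr (_ * _).
by apply: eq_bigr => i _; rewrite exprSr mulrA.
Qed.

Lemma qpochD a n r : qpoch x a (n + r) = qpoch x a n * qpoch x (x ^+ n * a) r.
Proof.
rewrite /qpoch big_split_ord /=; apply: congr1; apply: eq_bigr => i _.
by rewrite exprD mulrA (mulrC (x ^+ i)).
Qed.

End QPochhammer.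

Section NonRootOfUnity.
Variables (R : fieldType) (x : R).
Hypothesis xpow_inj : forall a b : nat, (x ^+ a == x ^+ b) = (a == b).

Lemma x_neq0 : x != 0.
Proof. by apply/eqP => x0; have := xpow_inj 1 2; rewrite x0 expr1 expr2 mul0r eqxx. Qed.

Let xpow_neq0 n : x ^+ n != 0.
Proof. exact: expf_neq0 x_neq0. Qed.

Lemma subr_xpowS_neq0 n : 1 - x ^+ n.+1 != 0.
Proof. by rewrite subr_eq0 -(expr0 x) xpow_inj. Qed.

Lemma subr1x_neq0 : 1 - x != 0.
Proof. by have := subr_xpowS_neq0 0; rewrite expr1. Qed.

Lemma qpoch_xpow_neq0 n k : qpoch x (x ^+ n.+1) k != 0.
Proof. by apply/prodf_neq0 => i _; rewrite -exprD addnS subr_xpowS_neq0. Qed.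

Lemma qfact_neq0 k : qpoch x x k != 0.
Proof. by have := qpoch_xpow_neq0 0 k; rewrite expr1. Qed.

Definition zpoly : {poly R} := 1 + (x - 1)%:P * 'X.
Definition shift : {poly R} := x%:P * 'X + 1.
Definition epoly k : {poly R} := qpoch x%:P (x%:P * zpoly) k.

Lemma zpoly_comp_shift : zpoly \Po shift = x%:P * zpoly.
Proof.
rewrite /zpoly /shift comp_polyD comp_polyM comp_polyX comp_polyC -polyC1 comp_polyC.
by rewrite !rmorphB /= polyC1; ring.
Qed.

Lemma epoly_comp_shift k : epoly k \Po shift = qpoch x%:P (x%:P * (x%:P * zpoly)) k.
Proof.
rewrite /epoly /qpoch rmorph_prod; apply: eq_bigr => i _.
by rewrite rmorphB rmorph1 !rmorphM /= rmorphXn /= !comp_polyC zpoly_comp_shift.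
Qed.

Lemma epoly0 : epoly 0 = 1.
Proof. by rewrite /epoly qpoch0. Qed.

Lemma epolySr k : epoly k.+1 = epoly k * (1 - x%:P ^+ k * (x%:P * zpoly)).
Proof. exact: qpochSr. Qed.

Lemma comp_shift_subr_zpoly_epoly k : ((1 - zpoly) * epoly k) \Po shift = epoly k.+1.
Proof.
rewrite comp_polyM epoly_comp_shift /epoly qpochSl comp_polyB comp_polyC.
by rewrite zpoly_comp_shift.
Qed.

Lemma subr_zpolyE : 1 - zpoly = (1 - x)%:P * 'X.
Proof. by rewrite /zpoly !rmorphB /=; ring. Qed.

Lemma coef_subr_zpolyM p i :
  ((1 - zpoly) * p)`_i = if i is i'.+1 then (1 - x) * p`_i' else 0.
Proof. by rewrite subr_zpolyE -mulrA (mulrC 'X) mulrA coefMX coefCM; case: i. Qed.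

Lemma subr_zpoly_epoly k : (1 - zpoly) * epoly k =
  (1 - (x ^+ k.+1)^-1) *: epoly k + (x ^+ k.+1)^-1 *: epoly k.+1.
Proof.
have zpolyE : ((x ^+ k.+1)^-1)%:P * (x%:P ^+ k * (x%:P * zpoly)) = zpoly.
  by rewrite !mulrA -rmorphXn -!rmorphM -mulrA -exprSr mulVf // mul1r.
by rewrite -!mul_polyC epolySr rmorphB /= polyC1 -{1}zpolyE; ring.
Qed.

Lemma epoly_coef0 k : (epoly k)`_0 = qpoch x x k.
Proof.
rewrite -horner_coef0 /epoly /qpoch horner_prod; apply: eq_bigr => i _.
rewrite -rmorphXn hornerD hornerN hornerC hornerCM hornerCM /zpoly.
by rewrite hornerD hornerC hornerCM hornerX mulr0 addr0 mulr1.
Qed.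

Lemma size_epoly_factor i : size (1 - x%:P ^+ i * (x%:P * zpoly)) = 2%N.
Proof.
have -> : 1 - x%:P ^+ i * (x%:P * zpoly) =
    (- (x ^+ i.+1 * (x - 1)))%:P * 'X + (1 - x ^+ i.+1)%:P.
  by rewrite /zpoly !(rmorphN, rmorphM, rmorphB, rmorphXn, rmorph1) /= exprSr; ring.
have x1_neq0 : x - 1 != 0 by rewrite -oppr_eq0 opprB subr1x_neq0.
have c_neq0 : x ^+ i.+1 * (x - 1) != 0 by rewrite mulf_neq0.
by rewrite size_MXaddC polyC_eq0 oppr_eq0 (negbTE c_neq0) size_polyC oppr_eq0 c_neq0.
Qed.

Lemma size_epoly k : size (epoly k) = k.+1.
Proof.
elim: k => [|k IHk]; first by rewrite /epoly qpoch0 size_poly1.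
rewrite epolySr size_mul ?IHk ?size_epoly_factor ?addn2 //.
  by rewrite -size_poly_eq0 IHk.
by rewrite -size_poly_eq0 size_epoly_factor.
Qed.

Definition epoly_moment k j : R :=
  (1 - x) * qpoch x x k ^+ 2 * qpoch x x j ^+ 2 / qpoch x x (k + j).+1.

Lemma epoly_moment_sym k j : epoly_moment k j = epoly_moment j k.
Proof. by rewrite /epoly_moment addnC; congr (_ / _); ring. Qed.

Lemma epoly_moment00 : epoly_moment 0 0 = 1.
Proof.
rewrite /epoly_moment qpochSr !qpoch0 expr0 expr1n !mul1r !mulr1.
by apply: divff; rewrite subr1x_neq0.
Qed.

Lemma epoly_moment_rec0_solve k y :
  x * y - ((1 - (x ^+ k.+1)^-1) * epoly_moment k 0 + (x ^+ k.+1)^-1 * y)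
    = (1 - x) * qpoch x x k ->
  y = epoly_moment k.+1 0.
Proof.
move=> rec.
have c_neq0 : x - (x ^+ k.+1)^-1 != 0.
  rewrite subr_eq0; apply: contraTneq isT => xE.
  have := subr_xpowS_neq0 k.+1.
  by rewrite exprS {1}xE mulVf ?subrr ?eqxx.
apply: (mulfI c_neq0).
have -> : (x - (x ^+ k.+1)^-1) * y =
    (1 - x) * qpoch x x k + (1 - (x ^+ k.+1)^-1) * epoly_moment k 0.
  by rewrite -rec; ring.
have := subr_xpowS_neq0 k; have := subr_xpowS_neq0 k.+1.
rewrite /epoly_moment !addn0 !qpochSr qpoch0 !exprSr => xk2 xk1.
by field; rewrite xk1 xk2 qfact_neq0 xpow_neq0 x_neq0.
Qed.

Lemma epoly_moment_rec_solve k j y :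
  x * y = (1 - (x ^+ k.+1)^-1) * (1 - (x ^+ j.+1)^-1) * epoly_moment k j
        + (1 - (x ^+ k.+1)^-1) * (x ^+ j.+1)^-1 * epoly_moment k j.+1
        + (x ^+ k.+1)^-1 * (1 - (x ^+ j.+1)^-1) * epoly_moment k.+1 j
        + (x ^+ k.+1)^-1 * (x ^+ j.+1)^-1 * y ->
  y = epoly_moment k.+1 j.+1.
Proof.
move=> rec.
have c_neq0 : x - (x ^+ k.+1)^-1 * (x ^+ j.+1)^-1 != 0.
  rewrite subr_eq0 -invfM -exprD; apply: contraTneq isT => xE.
  have := subr_xpowS_neq0 (k.+1 + j.+1).
  by rewrite exprS {1}xE mulVf ?subrr ?eqxx.
apply: (mulfI c_neq0).
have -> : (x - (x ^+ k.+1)^-1 * (x ^+ j.+1)^-1) * y =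
    (1 - (x ^+ k.+1)^-1) * (1 - (x ^+ j.+1)^-1) * epoly_moment k j
  + (1 - (x ^+ k.+1)^-1) * (x ^+ j.+1)^-1 * epoly_moment k j.+1
  + (x ^+ k.+1)^-1 * (1 - (x ^+ j.+1)^-1) * epoly_moment k.+1 j.
  by rewrite mulrBl rec; ring.
have := subr_xpowS_neq0 (k + j); have := subr_xpowS_neq0 (k + j).+1.
have := subr_xpowS_neq0 (k + j).+2.
rewrite /epoly_moment !addSn !addnS !qpochSr !exprSr !exprD => h3 h2 h1.
by field; rewrite h1 h2 h3 qfact_neq0 x_neq0 !xpow_neq0.
Qed.

Definition newton_coef n k (c : R) : R :=
  qpoch x (x ^+ n)^-1 k * x ^+ k * qpoch x (c * x ^+ k) (n - k) / qpoch x x k.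

Lemma newton_coef_out n c : newton_coef n n.+1 c = 0.
Proof. by rewrite /newton_coef qpochSr mulfV ?subrr ?mulr0 ?mul0r. Qed.

Lemma newton_coef0 n c : newton_coef n.+1 0 c = newton_coef n 0 c * (1 - c * x ^+ n).
Proof.
rewrite /newton_coef !subn0 !qpoch0 !expr0 !mulr1 !mul1r qpochSr.
by rewrite !divr1 (mulrC c).
Qed.

Let mulr_invxpowS n : x * (x ^+ n.+1)^-1 = (x ^+ n)^-1.
Proof. by rewrite exprS invfM mulrA mulfV ?mul1r // x_neq0. Qed.

Lemma newton_coefS n k c : (k <= n)%N ->
  newton_coef n.+1 k.+1 c =
  newton_coef n k.+1 c * ((x ^+ k.+1)^-1 - c * x ^+ n) - newton_coef n k c * (x ^+ k)^-1.
Proof.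
rewrite leq_eqVlt => /orP [/eqP ->|lt_kn].
  rewrite newton_coef_out mul0r add0r /newton_coef !subnn !qpoch0 !mulr1.
  rewrite qpochSl mulr_invxpowS qpochSr.
  have := subr_xpowS_neq0 n; rewrite exprSr => hn.
  by field; rewrite hn qfact_neq0 x_neq0 xpow_neq0.
have [r ->] : exists r, n = (k + r.+1)%N by exists (n - k.+1)%N; rewrite addnS -addSn subnKC.
rewrite /newton_coef subSS addKn addnS subSS addKn.
rewrite (qpochSl x (x ^+ (k + r).+2)^-1) mulr_invxpowS (qpochSr x (x ^+ (k + r).+1)^-1 k).
rewrite (qpochSl x (c * x ^+ k)) (qpochSr x (c * x ^+ k.+1)) qpochSr.
have -> : x * (c * x ^+ k) = c * x ^+ k.+1 by rewrite exprS; ring.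
have := subr_xpowS_neq0 k; rewrite !exprSr !exprD ?exprSr => hk.
by field; rewrite hk qfact_neq0 x_neq0 !xpow_neq0.
Qed.

Lemma qpoch_newton n b c :
  \sum_(k < n.+1) newton_coef n k c * qpoch x b k = \prod_(i < n) (b - c * x ^+ i).
Proof.
elim: n => [|n IHn].
  by rewrite big_ord1 big_ord0 /newton_coef subn0 !qpoch0 expr0 !mulr1 divr1.
rewrite [RHS]big_ord_recr /= -IHn mulr_suml.
have expand_l (k : 'I_n.+1) : newton_coef n k c * qpoch x b k * (b - c * x ^+ n) =
    newton_coef n k c * ((x ^+ k)^-1 - c * x ^+ n) * qpoch x b k
    - newton_coef n k c * (x ^+ k)^-1 * qpoch x b k.+1.
  by rewrite qpochSr; field; rewrite xpow_neq0.
rewrite (eq_bigr _ (fun k _ => expand_l k)) sumrB big_ord_recl /=.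
have expand_r (k : 'I_n.+1) :
    newton_coef n.+1 k.+1 c * qpoch x b k.+1 =
    newton_coef n k.+1 c * ((x ^+ k.+1)^-1 - c * x ^+ n) * qpoch x b k.+1
    - newton_coef n k c * (x ^+ k)^-1 * qpoch x b k.+1.
  by rewrite newton_coefS ?mulrBl // -ltnS.
rewrite (eq_bigr _ (fun k _ => expand_r k)) sumrB addrA; congr (_ - _).
rewrite [in RHS]big_ord_recl big_ord_recr /= newton_coef_out !mul0r addr0.
by rewrite newton_coef0 expr0 invr1 qpoch0 mulr1 addrC.
Qed.

Definition hahn_coef n k : R :=
  qpoch x (x ^- n) k * qpoch x (x ^+ n.+1) k * x ^+ k
    / (qpoch x x k * qpoch x x k * qpoch x x k).

Lemma sum_hahn_coef_epoly_moment n j :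
  \sum_(k < n.+1) hahn_coef n k * epoly_moment k j =
  (1 - x) * qpoch x x j ^+ 2 / qpoch x x (n + j).+1
    * \prod_(i < n) (x ^+ n.+1 - x ^+ j.+2 * x ^+ i).
Proof.
rewrite -qpoch_newton mulr_sumr; apply: eq_bigr => -[k /= lt_kn] _.
have := qpochD x x (k + j).+1 (n - k).
have -> : ((k + j).+1 + (n - k) = (n + j).+1)%N.
  by rewrite addSn addnAC subnKC // -ltnS.
have -> : x ^+ (k + j).+1 * x = x ^+ j.+2 * x ^+ k.
  by rewrite -exprSr -exprD addnC !addSn.
set Q := qpoch x (x ^+ j.+2 * x ^+ k) (n - k) => splitE.
have Q_neq0 : Q != 0.
  by move: (qfact_neq0 (n + j).+1); rewrite splitE mulf_eq0 negb_or => /andP[].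
rewrite /hahn_coef /epoly_moment /newton_coef splitE -/Q.
by field; rewrite Q_neq0 !qfact_neq0.
Qed.

Lemma prod_xpow_eq0 n j : (j < n)%N ->
  \prod_(i < n) (x ^+ n.+1 - x ^+ j.+2 * x ^+ i) = 0.
Proof.
move=> lt_jn; apply/eqP/prodf_eq0.
have lt_i : (n - j.+1 < n)%N by rewrite ltn_subrL (leq_ltn_trans (leq0n j) lt_jn).
exists (Ordinal lt_i) => //=.
by rewrite -exprD subr_eq0 xpow_inj addSn subnKC.
Qed.

Lemma prod_xpow_neq0 n : \prod_(i < n) (x ^+ n.+1 - x ^+ n.+2 * x ^+ i) != 0.
Proof.
apply/prodf_neq0 => i _; rewrite -exprD subr_eq0 xpow_inj.
by apply/eqP => nE; have := leq_addr i n.+2; rewrite -nE ltnn.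
Qed.

Lemma qpoch_xinv_neq0 n : qpoch x (x ^- n) n != 0.
Proof.
apply/prodf_neq0 => i _; rewrite subr_eq0; apply/negP => /eqP xE.
have /eqP : x ^+ n = x ^+ i by rewrite -[LHS]mul1r xE mulfVK ?xpow_neq0.
by rewrite xpow_inj => /eqP nE; move: (ltn_ord i); rewrite -nE ltnn.
Qed.

Lemma hahn_coef_diag_neq0 n : hahn_coef n n != 0.
Proof.
by rewrite /hahn_coef !(mulf_neq0, invr_eq0, qpoch_xinv_neq0, qpoch_xpow_neq0,
  qfact_neq0, xpow_neq0).
Qed.

Definition hahn_poly n : {poly R} := \sum_(k < n.+1) hahn_coef n k *: epoly k.

Lemma size_hahn_poly n : size (hahn_poly n) = n.+1.
Proof.
have size_lower : (size (\sum_(k < n) hahn_coef n k *: epoly k)%R < n.+1)%N.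
  rewrite ltnS; apply: leq_trans (size_sum _ _ _) _; apply/bigmax_leqP => k _.
  by apply: leq_trans (size_scale_leq _ _) _; rewrite size_epoly.
have size_top : size (hahn_coef n n *: epoly n) = n.+1.
  by rewrite size_scale ?size_epoly ?hahn_coef_diag_neq0.
by rewrite /hahn_poly big_ord_recr /= addrC size_addl size_top.
Qed.

Section ShiftFunctional.
Variable L : {linear {poly R} -> R | *%R}.
Hypothesis L_shift : forall f, x * L (f \Po shift) - L f = (x - 1) * f`_0 + f`_1.
Hypothesis L1 : L 1 = 1.

Lemma L_epolyM_rec k j :
  x * L (epoly k.+1 * epoly j.+1) =
    (1 - (x ^+ k.+1)^-1) * (1 - (x ^+ j.+1)^-1) * L (epoly k * epoly j)
  + (1 - (x ^+ k.+1)^-1) * (x ^+ j.+1)^-1 * L (epoly k * epoly j.+1)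
  + (x ^+ k.+1)^-1 * (1 - (x ^+ j.+1)^-1) * L (epoly k.+1 * epoly j)
  + (x ^+ k.+1)^-1 * (x ^+ j.+1)^-1 * L (epoly k.+1 * epoly j.+1).
Proof.
set f := (1 - zpoly) * epoly k * ((1 - zpoly) * epoly j).
have f0 : f`_0 = 0 by rewrite /f -mulrA coef_subr_zpolyM.
have f1 : f`_1 = 0 by rewrite /f -mulrA coef_subr_zpolyM coef0M coef_subr_zpolyM !mulr0.
have := L_shift f; rewrite f0 f1 mulr0 addr0 {1}/f comp_polyM.
rewrite !comp_shift_subr_zpoly_epoly => /eqP; rewrite subr_eq0 => /eqP ->.
rewrite /f !subr_zpoly_epoly mulrDl !mulrDr -!scalerAl -!scalerAr.
by rewrite !linearD !linearZ /=; ring.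
Qed.

Lemma L_epoly_rec k :
  x * L (epoly k.+1)
    - ((1 - (x ^+ k.+1)^-1) * L (epoly k) + (x ^+ k.+1)^-1 * L (epoly k.+1))
  = (1 - x) * qpoch x x k.
Proof.
have coefE : (x - 1) * ((1 - zpoly) * epoly k)`_0
    + ((1 - zpoly) * epoly k)`_1 = (1 - x) * qpoch x x k.
  by rewrite !coef_subr_zpolyM epoly_coef0 mulr0 add0r.
have := L_shift ((1 - zpoly) * epoly k).
by rewrite coefE comp_shift_subr_zpoly_epoly subr_zpoly_epoly linearD !linearZ.
Qed.

Lemma L_epolyM k j : L (epoly k * epoly j) = epoly_moment k j.
Proof.
suff : forall n k j, (k + j <= n)%N -> L (epoly k * epoly j) = epoly_moment k j.
  by apply; exact: leqnn.
move=> {k j}; elim=> [|n IHn] k j.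
  rewrite leqn0 addn_eq0 => /andP[/eqP-> /eqP->].
  by rewrite epoly0 mulr1 L1 epoly_moment00.
have L_epolyS_epoly0 i : (i <= n)%N -> L (epoly i.+1 * epoly 0) = epoly_moment i.+1 0.
  move=> le_in; rewrite epoly0 mulr1; apply: epoly_moment_rec0_solve.
  by have := IHn i 0%N; rewrite addn0 epoly0 mulr1 => <- //; exact: L_epoly_rec.
case: k j => [|k] [|j] le_kjn.
- by rewrite epoly0 mulr1 L1 epoly_moment00.
- by rewrite mulrC L_epolyS_epoly0 // epoly_moment_sym.
- by rewrite L_epolyS_epoly0 // -ltnS -(addn0 k.+1).
rewrite addSn addnS !ltnS in le_kjn.
apply: epoly_moment_rec_solve.
rewrite -IHn ?(ltnW le_kjn) // -IHn ?addnS // -IHn ?addSn //.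
exact: L_epolyM_rec.
Qed.

Lemma L_hahn_poly_epoly n j : L (hahn_poly n * epoly j) =
  (1 - x) * qpoch x x j ^+ 2 / qpoch x x (n + j).+1
    * \prod_(i < n) (x ^+ n.+1 - x ^+ j.+2 * x ^+ i).
Proof.
rewrite /hahn_poly mulr_suml linear_sum -sum_hahn_coef_epoly_moment.
by apply: eq_bigr => k _; rewrite -scalerAl linearZ /= L_epolyM.
Qed.

Lemma L_hahn_poly_epoly_lt n j : (j < n)%N -> L (hahn_poly n * epoly j) = 0.
Proof. by move=> lt_jn; rewrite L_hahn_poly_epoly prod_xpow_eq0 ?mulr0. Qed.

Lemma L_hahn_poly_epoly_diag_neq0 n : L (hahn_poly n * epoly n) != 0.
Proof.
rewrite L_hahn_poly_epoly; apply: mulf_neq0 (prod_xpow_neq0 n).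
apply: mulf_neq0; last by rewrite invr_eq0 qfact_neq0.
exact: mulf_neq0 subr1x_neq0 (expf_neq0 _ (qfact_neq0 n)).
Qed.

Lemma L_hahn_polyM_lt i j : (j < i)%N -> L (hahn_poly i * hahn_poly j) = 0.
Proof.
move=> lt_ji; rewrite [hahn_poly j]/hahn_poly mulr_sumr linear_sum big1 // => k _.
rewrite -scalerAr linearZ /= L_hahn_poly_epoly_lt ?mulr0 //.
exact: leq_ltn_trans (ltn_ord k : (k <= j)%N) lt_ji.
Qed.

Lemma L_hahn_poly_sqr n :
  L (hahn_poly n * hahn_poly n) = hahn_coef n n * L (hahn_poly n * epoly n).
Proof.
rewrite [X in hahn_poly n * X]/hahn_poly mulr_sumr linear_sum big_ord_recr /= big1 ?add0r.
  by rewrite -scalerAr linearZ.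
by move=> k _; rewrite -scalerAr linearZ /= L_hahn_poly_epoly_lt ?mulr0.
Qed.

End ShiftFunctional.

End NonRootOfUnity.

Section MomentFunctional.
Variable m : nat -> Qq.

Lemma Lfun_widen (p : {poly Qq}) n :
  (size p <= n)%N -> Lfun m p = \sum_(i < n) p`_i * m i.
Proof.
move=> size_p; rewrite /Lfun (big_ord_widen _ (fun i => p`_i * m i) size_p).
rewrite big_mkcond /=; apply: eq_bigr => i _; case: ltnP => // le_p_i.
by rewrite nth_default ?mul0r.
Qed.

Lemma Lfun_is_linear : linear_for *%R (Lfun m).
Proof.
move=> a p r; rewrite !(@Lfun_widen _ (maxn (size p) (size r))) ?leq_maxl ?leq_maxr //.
  rewrite mulr_sumr -big_split; apply: eq_bigr => i _.
  by rewrite coefD coefZ mulrDl mulrA.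
apply: leq_trans (size_add _ _) _; rewrite geq_max leq_maxr andbT.
by apply: leq_trans (size_scale_leq _ _) _; rewrite leq_maxl.
Qed.

HB.instance Definition _ :=
  GRing.isLinear.Build Qq {poly Qq} Qq _ (Lfun m) Lfun_is_linear.

Lemma Lfun_Xn k : Lfun m 'X^k = m k.
Proof.
rewrite (@Lfun_widen _ k.+1) ?size_polyXn // big_ord_recr /= big1 ?add0r.
  by rewrite coefXn eqxx mul1r.
by move=> i _; rewrite coefXn (ltn_eqF (ltn_ord i)) mul0r.
Qed.

End MomentFunctional.

Lemma qpow_inj a b : (q ^+ a == q ^+ b) = (a == b).
Proof.
rewrite /q -!tofracXn tofrac_eq; apply/eqP/eqP => [qE|-> //].
by have := congr1 (fun p : {poly rat} => size p) qE; rewrite /= !size_polyXn => -[].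
Qed.


Lemma Lfun_shift_pow m i :
  Lfun m (shift q ^+ i) = \sum_(k < i.+1) 'C(i, k)%:R * q ^+ k * m k.
Proof.
rewrite /shift exprD1n linear_sum; apply: eq_bigr => k _.
by rewrite exprMn -rmorphXn -mulrnAl -rmorphMn mul_polyC linearZ /= Lfun_Xn -mulr_natl.
Qed.

(* The Carlitz relation is the case f = 'X^n. *)
Lemma carlitz_functional_eq m : is_qBernoulliCarlitz m -> forall f : {poly Qq},
  q * Lfun m (f \Po shift q) - Lfun m f = (q - 1) * f`_0 + f`_1.
Proof.
move=> carlitz_m f; rewrite comp_polyE linear_sum.
under eq_bigr do rewrite linearZ /= Lfun_shift_pow.
rewrite /Lfun mulr_sumr -sumrB.
under eq_bigr do rewrite mulrCA -mulrBr carlitz_m.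
rewrite (big_ord_widen _ (fun i => f`_i * carlitz_rhs i) (leq_addr 2 (size f))).
rewrite big_mkcond /= (eq_bigr (fun i : 'I_(size f + 2) => f`_i * carlitz_rhs i)).
  rewrite addnC !big_ord_recl /= big1 ?addr0; first by rewrite /carlitz_rhs /= mulr1 mulrC.
  by move=> i _; rewrite /carlitz_rhs /= mulr0.
by move=> i _; case: ltnP => // le_f_i; rewrite nth_default ?mul0r.
Qed.

Lemma carlitz_moment0 m : is_qBernoulliCarlitz m -> m 0 = 1.
Proof.
move=> carlitz_m; have := carlitz_m 0; rewrite big_ord1 /carlitz_rhs /= expr0 mulr1 mul1r.
have q1_neq0 : q - 1 != 0 by rewrite -oppr_eq0 opprB (subr1x_neq0 qpow_inj).
by move=> m0E; apply: (mulfI q1_neq0); rewrite mulr1 -[in RHS]m0E; ring.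
Qed.

Theorem mainTheorem1 (beta : nat -> Qq) :
  is_qBernoulliCarlitz beta -> moments_of beta Pn.
Proof.
move=> carlitz_beta.
have L_shift := carlitz_functional_eq carlitz_beta.
have L1 : Lfun beta 1 = 1 by rewrite -(expr0 'X) Lfun_Xn carlitz_moment0.
split; first exact: carlitz_moment0.
split; first exact: size_hahn_poly qpow_inj.
split.
  move=> i j /eqP; rewrite neq_ltn => /orP[lt_ij|lt_ji].
  - by have /= := L_hahn_polyM_lt qpow_inj L_shift L1 lt_ij; rewrite mulrC.
  - by have /= := L_hahn_polyM_lt qpow_inj L_shift L1 lt_ji.
move=> n; have /= -> := L_hahn_poly_sqr qpow_inj L_shift L1 n.
rewrite mulf_neq0 ?(hahn_coef_diag_neq0 qpow_inj) //.
by have /= := L_hahn_poly_epoly_diag_neq0 qpow_inj L_shift L1 n.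
Qed.
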